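(* If the semigroup $\mathbb NA$ is scored, then for every $\boldsymbol\alpha\in\mathbb C^d$ the equivalence class $[\boldsymbol\alpha]$ is extreme.
   Context: $A\subset\mathbb Z^d$ is a finite set generating the group $\mathbb Z^d$; $\mathbb NA$ its monoid. For a facet $\sigma$ of the cone $\mathbb R_{\ge0}A$, $F_\sigma$ is the unique linear form (extended $\mathbb C$-linearly) with $F_\sigma(\mathbb R_{\ge0}A)\ge0$, $F_\sigma(\sigma)=0$, $F_\sigma(\mathbb Z^d)=\mathbb Z$. $\mathbb NA$ is scored if $\mathbb NA=\bigcap_{\sigma\text{ facet}}\{\mathbf a\in\mathbb Z^d:F_\sigma(\mathbf a)\in F_\sigma(\mathbb NA)\}$. For a face $\tau$, $E_\tau(\boldsymbol\alpha)=\{\boldsymbol\lambda\in\mathbb C(A\cap\tau)/\mathbb Z(A\cap\tau):\boldsymbol\alpha-\boldsymbol\lambda\in\mathbb NA+\mathbb Z(A\cap\tau)\}$, called full if it has $[\mathbb Q(A\cap\tau)\cap\mathbb Z^d:\mathbb Z(A\cap\tau)]$ elements; $\boldsymbol\alpha\sim\boldsymbol\beta$ iff $E_\tau(\boldsymbol\alpha)=E_\tau(\boldsymbol\beta)$ for all faces, $[\boldsymbol\alpha]$ the class. $\mathcal F_+(\boldsymbol\alpha)=\{\sigma:F_\sigma(\boldsymbol\alpha)\in F_\sigma(\mathbb NA)\}$. ${\rm Face}(\boldsymbol\alpha)$ is the set of faces $\tau$ such that $\boldsymbol\alpha-\boldsymbol\lambda\in\mathbb Z^d$ for some $\boldsymbol\lambda\in\mathbb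 C(A\cap\tau)$ and every facet containing $\tau$ lies in $\mathcal F_+(\boldsymbol\alpha)$. $[\boldsymbol\alpha]$ is extreme if $E_\tau(\boldsymbol\alpha)$ is full for all $\tau\in{\rm Face}(\boldsymbol\alpha)$ and empty for all $\tau\notin{\rm Face}(\boldsymbol\alpha)$. *)

From HB Require Import structures.
From mathcomp Require Import all_boot all_order all_algebra.
From mathcomp Require Import reals.
From mathcomp Require Import complex.
Set Implicit Arguments.
Unset Strict Implicit.
Unset Printing Implicit Defensive.
Import Order.TTheory GRing.Theory Num.Theory.
Local Open Scope ring_scope.

Section Defs.
Variables (R : realType) (d : nat).
Local Notation C := (R[i]).
Local Notation ZV := 'rV[int]_d.
Local Notation RV := 'rV[R]_d.
Local Notation CV := 'rV[C]_d.

Definition toQ (a : ZV) : 'rV[rat]_d := map_mx (fun z : int => z%:~R) a.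
Definition toR (a : ZV) : RV := map_mx (fun z : int => z%:~R) a.
Definition toC (a : ZV) : CV := map_mx (fun z : int => z%:~R) a.

Definition dotZ (F a : ZV) : int := \sum_(i < d) F 0 i * a 0 i.
Definition dotR (w x : RV) : R := \sum_(i < d) w 0 i * x 0 i.
Definition dotC (F : ZV) (x : CV) : C := \sum_(i < d) (F 0 i)%:~R * x 0 i.

Definition Zspan (S : seq ZV) (z : ZV) : Prop :=
  exists c : 'I_(size S) -> int, z = \sum_(i < size S) c i *: S`_i.
Definition Nspan (S : seq ZV) (z : ZV) : Prop :=
  exists c : 'I_(size S) -> nat, z = \sum_(i < size S) (c i)%:Z *: S`_i.
Definition Qspan (S : seq ZV) (q : 'rV[rat]_d) : Prop :=
  exists c : 'I_(size S) -> rat, q = \sum_(i < size S) c i *: toQ S`_i.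
Definition Cspan (S : seq ZV) (x : CV) : Prop :=
  exists c : 'I_(size S) -> C, x = \sum_(i < size S) c i *: toC S`_i.

Definition in_NA (A : seq ZV) (z : ZV) : Prop := Nspan A z.
Definition in_cone (A : seq ZV) (x : RV) : Prop :=
  exists c : 'I_(size A) -> R,
    (forall i, 0 <= c i) /\ x = \sum_(i < size A) c i *: toR A`_i.

Definition generates (A : seq ZV) : Prop := forall z : ZV, Zspan A z.

Definition rankR (S : seq ZV) : nat := \rank (\matrix_(i < size S) toR S`_i).

(* A face tau of the cone is cut out by a supporting linear form w:
   w >= 0 on the cone and tau = cone /\ ker w. *)
Definition supporting (A : seq ZV) (w : RV) : Prop :=
  forall x, in_cone A x -> 0 <= dotR w x.
Definition in_face (A : seq ZV) (w : RV) (x : RV) : Prop :=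
  in_cone A x /\ dotR w x = 0.
Definition Aface (A : seq ZV) (w : RV) : seq ZV :=
  [seq a <- A | dotR w (toR a) == 0].

(* Facets sigma are identified with their primitive forms F_sigma:
   F integral (F(Z^d) \subset Z), F >= 0 on the cone, the face cut out by F
   has dimension d-1, and F(Z^d) = Z. *)
Definition facet_form (A : seq ZV) (F : ZV) : Prop :=
  supporting A (toR F) /\
  rankR (Aface A (toR F)) = d.-1 /\
  exists z : ZV, dotZ F z = 1.

Definition scored (A : seq ZV) : Prop :=
  forall z : ZV, in_NA A z <->
    (forall F, facet_form A F -> exists u, in_NA A u /\ dotZ F z = dotZ F u).

Definition Fplus (A : seq ZV) (alpha : CV) (F : ZV) : Prop :=
  exists u, in_NA A u /\ dotC F alpha = (dotZ F u)%:~R.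

Definition in_Face (A : seq ZV) (alpha : CV) (w : RV) : Prop :=
  (exists lam, Cspan (Aface A w) lam /\ exists z : ZV, alpha - lam = toC z) /\
  (forall F, facet_form A F ->
     (forall x, in_face A w x -> dotR (toR F) x = 0) -> Fplus A alpha F).

(* "the set of cosets modulo H of elements satisfying P has exactly n elements",
   via a system of n pairwise incongruent representatives *)
Definition ncosets (V : zmodType) (P H : V -> Prop) (n : nat) : Prop :=
  exists f : 'I_n -> V,
    (forall i, P (f i)) /\
    (forall i j, H (f i - f j) -> i = j) /\
    (forall v, P v -> exists i, H (v - f i)).

(* lambda (a representative in C(A\cap tau)) defines an element of E_tau(alpha) *)
Definition E_pred (A : seq ZV) (alpha : CV) (S : seq ZV) (lam : CV) : Prop :=
  Cspan S lam /\
  exists u z : ZV, in_NA A u /\ Zspan S z /\ alpha - lam = toC (u + z).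

Definition index_is (S : seq ZV) (n : nat) : Prop :=
  ncosets (fun z : ZV => Qspan S (toQ z)) (Zspan S) n.

Definition E_full (A : seq ZV) (alpha : CV) (S : seq ZV) : Prop :=
  exists n, index_is S n /\
    ncosets (E_pred A alpha S) (fun x : CV => exists z, Zspan S z /\ x = toC z) n.

Definition E_empty (A : seq ZV) (alpha : CV) (S : seq ZV) : Prop :=
  forall lam, ~ E_pred A alpha S lam.

Definition extreme (A : seq ZV) (alpha : CV) : Prop :=
  forall w : RV, supporting A w ->
    (in_Face A alpha w -> E_full A alpha (Aface A w)) /\
    (~ in_Face A alpha w -> E_empty A alpha (Aface A w)).

End Defs.

From HB Require Import structures.
From mathcomp Require Import all_boot all_order all_algebra.
From mathcomp Require Import reals complex.
From mathcomp Require Import zify ring.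
From Stdlib Require Import Classical.
Set Implicit Arguments.
Unset Strict Implicit.
Unset Printing Implicit Defensive.
Import Order.TTheory GRing.Theory Num.Theory.
Local Open Scope ring_scope.

(* Let tau be a face and S = A \cap tau.  If lam is in E_tau(alpha), every facet F through
   tau vanishes on S, so F(alpha) = F(u) for some u in NA: tau is in Face(alpha).  Conversely,
   for tau in Face(alpha) pick lam0 in C(S) with beta = alpha - lam0 in Z^d.  The candidates
   for E_tau(alpha) are the classes lam0 - v, v running over the finite group
   (Q(S) \cap Z^d) / Z(S), and lam0 - v lies in E_tau(alpha) as soon as beta + v is in
   NA + Z(S).  Let s be the sum of S.  A facet through tau takes on beta + v + k s the value
   F(beta) = F(alpha), which is in F(NA); each of the finitely many other facets has
   F(s) >= 1, and F(NA) contains all large integers.  So for k large every facet value of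
   beta + v + k s is in F(NA), and since NA is scored, beta + v + k s is in NA. *)

Lemma intr_mx_inj (K : numDomainType) m n :
  injective (map_mx (fun z : int => z%:~R : K) : 'M[int]_(m, n) -> 'M[K]_(m, n)).
Proof.
move=> a b /matrixP eab; apply/matrixP => i j.
by have /eqP := eab i j; rewrite !mxE eqr_int => /eqP.
Qed.

Lemma subrBB (V : zmodType) (a x y : V) : (a - x) - (a - y) = y - x.
Proof. by rewrite opprB addrC addrA subrK. Qed.

Lemma rat_mx_common_denominator m n (P : 'M[rat]_(m, n)) :
  exists2 D : int, 0 < D & exists E : 'M[int]_(m, n), D%:~R *: P = map_mx intr E.
Proof.
pose D : int := \prod_i \prod_j denq (P i j).
have D_gt0 : 0 < D by apply: prodr_gt0 => i _; apply: prodr_gt0 => j _; exact: denq_gt0.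
exists D => //; exists (\matrix_(i, j) (numq (P i j) * (D %/ denq (P i j))%Z)).
apply/matrixP => i j; rewrite !mxE.
have denqD : (denq (P i j) %| D)%Z.
  by rewrite /D (bigD1 i) //= (bigD1 j) //= -mulrA dvdz_mulr.
by rewrite -{1}(divzK denqD) !rmorphM /= numqE; ring.
Qed.

Lemma uniform_threshold (X : finType) (P : X -> nat -> Prop) :
  (forall x, exists b, forall k, (b <= k)%N -> P x k) ->
  exists K, forall x k, (K <= k)%N -> P x k.
Proof.
move=> Pev.
suff [K HK] : exists K, forall x, x \in enum X -> forall k, (K <= k)%N -> P x k.
  by exists K => x k; apply: HK; rewrite mem_enum.
elim: (enum X) => [|x s [K HK]]; first by exists 0%N.
have [b Hb] := Pev x; exists (maxn b K) => y; rewrite inE.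
by case/orP=> [/eqP->|ys] k; rewrite geq_max => /andP[bk Kk]; [apply: Hb | apply: HK].
Qed.

Section CosetCounting.
Variables (V : zmodType) (H : V -> Prop).
Hypothesis HB : forall a b, H a -> H b -> H (a - b).

Lemma ncosets_of_cover (L : seq V) (P : V -> Prop) :
  {in L, forall x, P x} -> (forall v, P v -> exists2 x, x \in L & H (v - x)) ->
  exists n, ncosets P H n.
Proof.
have HN a : H a -> H (- a).
  by move=> Ha; rewrite -sub0r; apply: HB => //; rewrite -(subrr a); apply: HB.
have HD a b : H a -> H b -> H (a + b).
  by move=> Ha Hb; rewrite -[b]opprK; apply: HB => //; apply: HN.
elim: L P => [|x L IHL] P LP Lcov.
  exists 0%N, (fun i : 'I_0 => 0); split=> [[]//|]; split=> [[]//|v /Lcov[]//].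
case: (classic (exists2 y, y \in L & H (x - y))) => [[y yL Hxy]|xnew].
  apply: IHL => [z zL|v /Lcov[z]]; first by apply: LP; rewrite inE zL orbT.
  rewrite inE => /orP[/eqP->|zL] Hvz; last by exists z.
  by exists y => //; rewrite -[v](subrK x) -addrA; apply: HD.
pose P' v := P v /\ ~ H (v - x).
have [n [f [fP [finj fcov]]]] : exists n, ncosets P' H n.
  apply: IHL => [z zL|v [Pv nHvx]].
    split; first by apply: LP; rewrite inE zL orbT.
    by move=> Hzx; apply: xnew; exists z => //; rewrite -opprB; apply: HN.
  by have [z] := Lcov v Pv; rewrite inE => /orP[/eqP->|zL]; [|exists z].
exists n.+1, (fun i => if unlift ord0 i is Some j then f j else x); split; [|split].
- by move=> i; case: unliftP => [j _|_]; [case: (fP j)|apply: LP; rewrite mem_head].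
- move=> i j; case: unliftP => [i' ->|->]; case: unliftP => [j' ->|->] //.
  + by move/finj->.
  + by case: (fP i').
  + by case: (fP j') => _ nH /HN; rewrite opprB.
- move=> v Pv; case: (classic (H (v - x))) => Hvx; first by exists ord0; rewrite unlift_none.
  by have [j] := fcov v (conj Pv Hvx); exists (lift ord0 j); rewrite liftK.
Qed.

Lemma ncosets_of_labels (X : finType) (lab : V -> X) (P : V -> Prop) :
  (forall u v, P u -> P v -> lab u = lab v -> H (u - v)) -> exists n, ncosets P H n.
Proof.
move=> Hlab.
have cover : forall s : seq X, exists L : seq V, {in L, forall x, P x} /\
    forall v, P v -> lab v \in s -> exists2 x, x \in L & lab x = lab v.
  elim=> [|y s [L [LP Lcov]]]; first by exists [::].
  case: (classic (exists2 u, P u & lab u = y)) => [[u Pu labu]|ny].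
    exists (u :: L); split=> [z|v Pv]; first by rewrite inE => /orP[/eqP->|/LP].
    rewrite inE => /orP[/eqP->|labs]; first by exists u; rewrite ?mem_head.
    by have [z zL] := Lcov v Pv labs; exists z; rewrite // inE zL orbT.
  exists L; split=> // v Pv; rewrite inE => /orP[/eqP labv|]; last exact: Lcov.
  by case: ny; exists v.
have [L [LP Lcov]] := cover (enum X).
apply: (ncosets_of_cover LP) => v Pv.
by have [x xL labx] := Lcov v Pv (mem_enum _ _); exists x => //; apply: Hlab => //; apply: LP.
Qed.

End CosetCounting.

Lemma toQ_is_zmod_morphism d : zmod_morphism (@toQ d).
Proof. exact: map_mxB. Qed.
HB.instance Definition _ d :=
  GRing.isZmodMorphism.Build _ _ (@toQ d) (@toQ_is_zmod_morphism d).

Lemma toC_is_zmod_morphism (R : realType) d : zmod_morphism (@toC R d).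
Proof. exact: map_mxB. Qed.
HB.instance Definition _ R d :=
  GRing.isZmodMorphism.Build _ _ (@toC R d) (@toC_is_zmod_morphism R d).

Lemma dotZ_is_scalar d (F : 'rV[int]_d) : scalar (dotZ F).
Proof.
move=> c a b; rewrite /dotZ mulr_sumr -big_split; apply: eq_bigr => i _.
by rewrite !mxE mulrDr mulrCA.
Qed.
HB.instance Definition _ d F :=
  GRing.isLinear.Build _ _ _ _ (@dotZ d F) (dotZ_is_scalar F).

Lemma dotC_is_scalar (R : realType) d (F : 'rV[int]_d) : scalar (@dotC R d F).
Proof.
move=> c a b; rewrite /dotC mulr_sumr -big_split; apply: eq_bigr => i _.
by rewrite !mxE mulrDr mulrCA.
Qed.
HB.instance Definition _ R d F :=
  GRing.isLinear.Build _ _ _ _ (@dotC R d F) (dotC_is_scalar F).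

Lemma dotR_is_scalar (R : realType) d (w : 'rV[R]_d) : scalar (dotR w).
Proof.
move=> c a b; rewrite /dotR mulr_sumr -big_split; apply: eq_bigr => i _.
by rewrite !mxE mulrDr mulrCA.
Qed.
HB.instance Definition _ R d w :=
  GRing.isLinear.Build _ _ _ _ (@dotR R d w) (dotR_is_scalar w).

Section IntegerLattice.
Variable d : nat.
Local Notation ZV := 'rV[int]_d.
Implicit Types (S : seq ZV) (F a z : ZV).

Lemma toQ_inj : injective (@toQ d). Proof. exact: intr_mx_inj. Qed.

Lemma toQZ c a : toQ (c *: a) = c%:~R *: toQ a.
Proof. exact: map_mxZ. Qed.

Lemma toQ_sum m (c : 'I_m -> int) (v : 'I_m -> ZV) :
  toQ (\sum_i c i *: v i) = \sum_i (c i)%:~R *: toQ (v i).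
Proof. by rewrite raddf_sum; apply: eq_bigr => i _; exact: toQZ. Qed.

Lemma dotZZl c F a : dotZ (c *: F) a = c * dotZ F a.
Proof. by rewrite /dotZ mulr_sumr; apply: eq_bigr => i _; rewrite mxE mulrA. Qed.

Lemma ZspanB S a b : Zspan S a -> Zspan S b -> Zspan S (a - b).
Proof.
move=> [ca ->] [cb ->]; exists (fun i => ca i - cb i).
by rewrite -sumrB; apply: eq_bigr => i _; rewrite scalerBl.
Qed.

Lemma ZspanN S a : Zspan S a -> Zspan S (- a).
Proof.
by move=> [c ->]; exists (fun i => - c i); rewrite -sumrN; apply: eq_bigr => i _; rewrite scaleNr.
Qed.

Lemma Zspan_dotZ_eq0 S F z : {in S, forall a, dotZ F a = 0} -> Zspan S z -> dotZ F z = 0.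
Proof.
move=> FS [c ->]; rewrite linear_sum big1 // => i _.
by rewrite linearZ /= FS ?mulr0 // mem_nth.
Qed.

Lemma dotZ_sum_ge1 S F a : {in S, forall b, 0 <= dotZ F b} -> a \in S -> dotZ F a != 0 ->
  1 <= dotZ F (\sum_(j < size S) S`_j).
Proof.
move=> F_ge0 aS Fa; have aI : (index a S < size S)%N by rewrite index_mem.
rewrite linear_sum (bigD1 (Ordinal aI)) //= nth_index //.
set rest := \sum_(j < _ | _) _.
have : 0 <= rest by apply: sumr_ge0 => j _; apply: F_ge0; exact: mem_nth.
by have := F_ge0 a aS; move: Fa; lia.
Qed.

Definition span_mxQ S : 'M[rat]_(size S, d) := \matrix_(i < size S) toQ S`_i.

Lemma QspanP S q : reflect (Qspan S q) (q <= span_mxQ S)%MS.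
Proof.
apply: (iffP submxP) => [[c ->]|[c ->]].
  by exists (fun i => c 0 i); rewrite mulmx_sum_row; apply: eq_bigr => i _; rewrite rowK.
by exists (\row_i c i); rewrite mulmx_sum_row; apply: eq_bigr => i _; rewrite rowK mxE.
Qed.

Lemma Qspan_common_denominator S : exists2 D : int, 0 < D &
  exists E : 'M[int]_(d, size S), forall v, Qspan S (toQ v) ->
    D *: v = \sum_j (v *m E) 0 j *: S`_j.
Proof.
have [D D_gt0 [E DPE]] := rat_mx_common_denominator (pinvmx (span_mxQ S)).
exists D => //; exists E => v /QspanP/mulmxKpV Sv; apply: toQ_inj.
rewrite toQ_sum toQZ -{1}Sv scalemxAl scalemxAr DPE -map_mxM mulmx_sum_row.
by apply: eq_bigr => j _; rewrite rowK mxE.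
Qed.

Lemma index_exists S : exists n, index_is S n.
Proof.
have [D D_gt0 [E DvE]] := Qspan_common_denominator S.
have modD x : (`|(x %% D)%Z| < `|D|)%N.
  by have := modz_ge0 x (lt0r_neq0 D_gt0); have := ltz_pmod x D_gt0; lia.
(* Vectors whose coefficient rows v *m E agree modulo D differ by an element of Z(S). *)
pose lab (v : ZV) : {ffun 'I_(size S) -> 'I_`|D|} := [ffun j => Ordinal (modD ((v *m E) 0 j))].
apply: (ncosets_of_labels (@ZspanB S) (lab := lab)) => u v Su Sv /ffunP labuv.
exists (fun j => divz ((u *m E) 0 j) D - divz ((v *m E) 0 j) D).
apply: (scalemx_inj (lt0r_neq0 D_gt0)); rewrite scalerBr (DvE u) // (DvE v) // scaler_sumr -sumrB.
apply: eq_bigr => j _; rewrite scalerA -scalerBl; congr (_ *: _).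
have := congr1 val (labuv j); rewrite !ffunE /=.
have := modz_ge0 ((u *m E) 0 j) (lt0r_neq0 D_gt0).
have := modz_ge0 ((v *m E) 0 j) (lt0r_neq0 D_gt0).
lia.
Qed.

End IntegerLattice.

Section ExtremeClasses.
Variables (R : realType) (d : nat).
Local Notation C := (R[i]).
Local Notation ZV := 'rV[int]_d.
Implicit Types (A S : seq ZV) (F a z : ZV) (w : 'rV[R]_d).

Lemma toR_inj : injective (@toR R d). Proof. exact: intr_mx_inj. Qed.
Lemma toC_inj : injective (@toC R d). Proof. exact: intr_mx_inj. Qed.

Lemma dotRZl c w (x : 'rV[R]_d) : dotR (c *: w) x = c * dotR w x.
Proof. by rewrite /dotR mulr_sumr; apply: eq_bigr => i _; rewrite mxE mulrA. Qed.

Lemma dotR_toR F a : dotR (toR R F) (toR R a) = (dotZ F a)%:~R.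
Proof. by rewrite /dotR rmorph_sum; apply: eq_bigr => i _; rewrite !mxE rmorphM. Qed.

Lemma dotC_toC F a : dotC F (toC R a) = (dotZ F a)%:~R.
Proof. by rewrite /dotC rmorph_sum; apply: eq_bigr => i _; rewrite mxE rmorphM. Qed.

Lemma CspanB S (x y : 'rV[C]_d) : Cspan S x -> Cspan S y -> Cspan S (x - y).
Proof.
move=> [cx ->] [cy ->]; exists (fun i => cx i - cy i).
by rewrite -sumrB; apply: eq_bigr => i _; rewrite scalerBl.
Qed.

Lemma Cspan_dotC_eq0 S F (x : 'rV[C]_d) :
  {in S, forall a, dotZ F a = 0} -> Cspan S x -> dotC F x = 0.
Proof.
move=> FS [c ->]; rewrite linear_sum big1 // => i _.
by rewrite linearZ /= dotC_toC FS ?mulr0 // mem_nth.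
Qed.

Lemma Cspan_toC_Qspan S v : Cspan S (toC R v) <-> Qspan S (toQ v).
Proof.
have toC_ratr u : map_mx ratr (toQ u) = toC R u.
  by apply/matrixP => i j; rewrite !mxE rmorph_int.
split=> [[c Sc]|[c Sc]].
  apply/QspanP; rewrite -(map_submx (ratr : {rmorphism rat -> C})) toC_ratr Sc.
  apply/submxP; exists (\row_i c i); rewrite mulmx_sum_row.
  by apply: eq_bigr => i _; rewrite mxE -map_row rowK toC_ratr.
exists (fun i => ratr (c i)); rewrite -toC_ratr Sc.
apply/matrixP => i j; rewrite !mxE !summxE rmorph_sum; apply: eq_bigr => k _.
by rewrite !mxE rmorphM rmorph_int.
Qed.

Lemma in_cone_mem A a : a \in A -> in_cone A (toR R a).
Proof.
move=> aA; have aI : (index a A < size A)%N by rewrite index_mem.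
exists (fun j => (j == Ordinal aI)%:R); split=> [j|]; first by case: (j == _).
rewrite (bigD1 (Ordinal aI)) //= eqxx scale1r nth_index // big1 ?addr0 // => j /negbTE->.
by rewrite scale0r.
Qed.

Lemma supporting_ge0 A F : supporting A (toR R F) -> {in A, forall a, 0 <= dotZ F a}.
Proof. by move=> supF a /in_cone_mem/supF; rewrite dotR_toR ler0z. Qed.

Lemma Aface_sub A w : {subset Aface A w <= A}.
Proof. by move=> a; rewrite mem_filter => /andP[]. Qed.

Lemma vanish_on_faceP A w F : supporting A w ->
  (forall x, in_face A w x -> dotR (toR R F) x = 0) <-> {in Aface A w, forall a, dotZ F a = 0}.
Proof.
move=> supw; split=> [Fw a | FS x [[c [c_ge0 ->]] wx]].
  rewrite mem_filter => /andP[/eqP wa aA].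
  by apply/eqP; rewrite -(intr_eq0 R) -dotR_toR Fw //; split=> //; exact: in_cone_mem.
have wA_ge0 i : 0 <= c i * dotR w (toR R A`_i).
  by rewrite mulr_ge0 //; apply: supw; apply: in_cone_mem; exact: mem_nth.
rewrite linear_sum in wx; rewrite linear_sum; apply: big1 => i _; rewrite linearZ /=.
have {}wx : \sum_j c j * dotR w (toR R A`_j) = 0.
  by rewrite -[RHS]wx; apply: eq_bigr => j _; rewrite linearZ.
have /(_ i isT)/eqP := psumr_eq0P (fun j _ => wA_ge0 j) wx.
rewrite mulf_eq0 => /orP[/eqP->|wAi]; first by rewrite mul0r.
by rewrite dotR_toR FS ?mulr0 // mem_filter wAi mem_nth.
Qed.

Lemma facet_forms_proportional A F F' : facet_form R A F -> facet_form R A F' ->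
  Aface A (toR R F') = Aface A (toR R F) -> exists k : int, F' = k *: F.
Proof.
move=> [_ [rkF [z Fz]]] _ faceF'.
set T := Aface A (toR R F); pose M := \matrix_(i < size T) toR R T`_i.
have rkM : \rank M = d.-1 := rkF.
have d_gt0 : (0 < d)%N.
  rewrite lt0n; apply/eqP => d0; move: Fz; rewrite /dotZ big1 // => i.
  by have := ltn_ord i; rewrite {2}d0.
have kerT G : Aface A (toR R G) = T -> (toR R G <= kermx M^T)%MS.
  move=> faceG; rewrite sub_kermx; apply/eqP/matrixP => i j; rewrite !mxE.
  have : T`_j \in Aface A (toR R G) by rewrite faceG mem_nth.
  rewrite mem_filter => /andP[/eqP GT _]; rewrite -[RHS]GT (ord1 i).
  by apply: eq_bigr => k _; rewrite !mxE.
have rk_ker : \rank (kermx M^T) = 1%N.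
  by rewrite mxrank_ker mxrank_tr rkM; case: (d) d_gt0 => // n _; rewrite subSn // subnn.
have F_neq0 : toR R F != 0.
  apply/eqP => F0; have := dotR_toR F z.
  by rewrite F0 -(scale0r (0 : 'rV[R]_d)) dotRZl mul0r Fz => /eqP; rewrite eq_sym oner_eq0.
have [_] := mxrank_leqif_eq (kerT F erefl).
rewrite rank_rV F_neq0 rk_ker eqxx => /esym/andP[_ kerF].
have /submxP[c F'c] := submx_trans (kerT F' faceF') kerF.
rewrite [c]mx11_scalar mul_scalar_mx in F'c.
exists (dotZ F' z); apply: toR_inj; rewrite [RHS]map_mxZ F'c; congr (_ *: _).
by have := congr1 (fun u => dotR u (toR R z)) F'c; rewrite /= dotRZl !dotR_toR Fz mulr1.
Qed.

Lemma facet_form_unique A F F' : generates A -> facet_form R A F -> facet_form R A F' ->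
  Aface A (toR R F') = Aface A (toR R F) -> F' = F.
Proof.
move=> genA fF fF' faceF'; have [k F'kF] := facet_forms_proportional fF fF' faceF'.
have [supF [_ [z Fz]]] := fF; have [supF' [_ [z' F'z']]] := fF'.
have /intUnitRing.unitzPl : dotZ F z' * k = 1 by rewrite mulrC -dotZZl -F'kF.
rewrite qualifE /= => /orP[]/eqP k1; first by rewrite F'kF k1 scale1r.
have FA a : a \in A -> dotZ F a = 0.
  move=> aA; apply/eqP; rewrite eq_le (supporting_ge0 supF aA) andbT.
  by rewrite -oppr_ge0 -mulN1r -k1 -dotZZl -F'kF (supporting_ge0 supF' aA).
by move: Fz; rewrite (Zspan_dotZ_eq0 FA (genA z)).
Qed.

Lemma NA_values_eventually A F z : generates A -> {in A, forall a, 0 <= dotZ F a} ->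
  dotZ F z = 1 -> exists b : int, forall n, b <= n -> exists u, in_NA A u /\ dotZ F u = n.
Proof.
move=> genA F_ge0 Fz; have [c zc] := genA z.
pose f (i : 'I_(size A)) := dotZ F A`_i; pose N := \sum_i f i; pose M := \sum_i `|c i|.
have f_ge0 i : 0 <= f i by apply: F_ge0; exact: mem_nth.
have cf1 : \sum_i c i * f i = 1.
  by rewrite -Fz zc linear_sum; apply: eq_bigr => i _; rewrite linearZ.
have N_gt0 : 0 < N.
  rewrite lt_def sumr_ge0 // andbT; apply/eqP => /psumr_eq0P f0.
  by move: cf1; rewrite big1 // => i _; rewrite f0 ?mulr0.
have M_ge0 : 0 <= M by rewrite sumr_ge0.
have cM i : `|c i| <= M by rewrite /M (bigD1 i) //= lerDl sumr_ge0.
(* n = q N + r = sum_i (q + r c_i) F(a_i), and q + r c_i >= 0 once q >= N M. *)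
exists (N * N * M) => n NNMn.
pose q := (n %/ N)%Z; pose r := (n %% N)%Z.
have nqr : n = q * N + r := divz_eq n N.
have r_ge0 : 0 <= r by apply: modz_ge0; rewrite gt_eqF.
have rN : r < N by apply: ltz_pmod.
have NMq : N * M <= q by nia.
have e_ge0 i : 0 <= q + r * c i.
  by have := lerNnormlW (cM i); move: (c i) => ci; nia.
exists (\sum_i (absz (q + r * c i))%:Z *: A`_i).
split; first by exists (fun i => absz (q + r * c i)).
rewrite linear_sum; under eq_bigr => i _ do rewrite linearZ /= gez0_abs // mulrDl -mulrA.
by rewrite big_split /= -!mulr_sumr cf1 mulr1 nqr.
Qed.

Lemma facet_uniform_threshold A (Q : ZV -> nat -> Prop) : generates A ->
  (forall F, facet_form R A F -> exists b, forall k, (b <= k)%N -> Q F k) ->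
  exists K, forall F, facet_form R A F -> forall k, (K <= k)%N -> Q F k.
Proof.
move=> genA Qev.
(* A facet form is determined by which elements of A it kills. *)
pose zeros F : {ffun 'I_(size A) -> bool} := [ffun i : 'I_(size A) => dotZ F A`_i == 0].
have [K HK] : exists K, forall x k, (K <= k)%N ->
    forall F, facet_form R A F -> zeros F = x -> Q F k.
  apply: uniform_threshold => x.
  case: (classic (exists2 F0, facet_form R A F0 & zeros F0 = x)) => [[F0 fF0 <-]|nx].
    have [b Hb] := Qev F0 fF0; exists b => k bk F fF /ffunP zerosF.
    suff -> : F = F0 by apply: Hb.
    apply: facet_form_unique genA fF0 fF _; apply: eq_in_filter => a aA.
    have aI : (index a A < size A)%N by rewrite index_mem.
    by have := zerosF (Ordinal aI); rewrite !ffunE /= nth_index // !dotR_toR !intr_eq0.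
  by exists 0%N => k _ F fF zerosF; case: nx; exists F.
by exists K => F fF k Kk; exact: HK.
Qed.

Section Saturation.
Variables (A : seq ZV) (w : 'rV[R]_d) (alpha lam0 : 'rV[C]_d) (beta : ZV).
Hypotheses (genA : generates A) (scA : scored R A) (supw : supporting A w).
Hypothesis Fplus_face : forall F, facet_form R A F ->
  (forall x, in_face A w x -> dotR (toR R F) x = 0) -> Fplus A alpha F.
Hypotheses (lam0S : Cspan (Aface A w) lam0) (alpha_lam0 : alpha - lam0 = toC R beta).

Local Notation S := (Aface A w).
Local Notation s := (\sum_(j < size S) S`_j).

Lemma facet_values_eventually v F : Qspan S (toQ v) -> facet_form R A F ->
  exists b, forall k, (b <= k)%N ->
    exists u, in_NA A u /\ dotZ F (beta + v + k%:Z *: s) = dotZ F u.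
Proof.
move=> Sv fF; have [supF [_ [z Fz]]] := fF.
case: (classic (forall x, in_face A w x -> dotR (toR R F) x = 0)) => [Fw|Fnw].
  have [u [NAu Fu]] := Fplus_face fF Fw; have FS := (vanish_on_faceP F supw).1 Fw.
  have Fv : dotZ F v = 0.
    by apply/eqP; rewrite -(intr_eq0 C) -dotC_toC (Cspan_dotC_eq0 FS) // Cspan_toC_Qspan.
  have Fs : dotZ F s = 0.
    by apply: Zspan_dotZ_eq0 FS _; exists (fun _ => 1); apply: eq_bigr => j _; rewrite scale1r.
  exists 0%N => k _; exists u; split=> //; apply/eqP; rewrite -(eqr_int C) -Fu.
  rewrite !linearD linearZ /= Fv Fs mulr0 !addr0 -dotC_toC -alpha_lam0 linearB /=.
  by rewrite (Cspan_dotC_eq0 FS lam0S) subr0.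
have [a aS Fa] : exists2 a, a \in S & dotZ F a != 0.
  case: (classic (exists2 a, a \in S & dotZ F a != 0)) => // noa; case: Fnw.
  apply/(vanish_on_faceP F supw) => a aS; apply/eqP; apply: contraT => Fa.
  by case: noa; exists a.
have s_ge1 : 1 <= dotZ F s.
  by apply: (dotZ_sum_ge1 _ aS Fa) => b /Aface_sub; apply: supporting_ge0.
have [b Fb] := NA_values_eventually genA (supporting_ge0 supF) Fz.
exists (`|b| + `|dotZ F (beta + v)|)%N => k bk.
have [|u [NAu Fu]] := Fb (dotZ F (beta + v + k%:Z *: s)); last by exists u.
rewrite (linearD (dotZ F) (beta + v)) linearZ /=.
by move: bk s_ge1; move: (dotZ F (beta + v)) (dotZ F s) => x y; nia.
Qed.

Lemma shift_in_NA_add_Zspan v : Qspan S (toQ v) ->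
  exists u z, in_NA A u /\ Zspan S z /\ beta + v = u + z.
Proof.
move=> Sv; have [K HK] := facet_uniform_threshold
  (Q := fun F k => exists u, in_NA A u /\ dotZ F (beta + v + k%:Z *: s) = dotZ F u)
  genA (fun F fF => facet_values_eventually Sv fF).
exists (beta + v + K%:Z *: s), (- (K%:Z *: s)); split; [|split].
- by apply/scA => F fF; exact: HK fF K (leqnn K).
- by exists (fun _ => - K%:Z); rewrite scaler_sumr -sumrN; apply: eq_bigr => j _; rewrite scaleNr.
- by rewrite addrK.
Qed.

End Saturation.

Lemma E_pred_in_Face A w alpha lam : supporting A w ->
  E_pred A alpha (Aface A w) lam -> in_Face A alpha w.
Proof.
move=> supw [lamS [u [z [NAu [zS alpha_lam]]]]].
split; first by exists lam; split=> //; exists (u + z).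
move=> F _ /(vanish_on_faceP F supw) FS; exists u; split=> //.
rewrite -(subrK lam alpha) alpha_lam linearD /= (Cspan_dotC_eq0 FS lamS) addr0.
by rewrite dotC_toC linearD /= (Zspan_dotZ_eq0 FS zS) addr0.
Qed.

Lemma E_full_of_in_Face A w alpha : generates A -> scored R A -> supporting A w ->
  in_Face A alpha w -> E_full A alpha (Aface A w).
Proof.
move=> genA scA supw [[lam0 [lam0S [beta alpha_lam0]]] Fplus_face].
have [n idx] := index_exists (Aface A w); have [f [fS [f_inj f_cover]]] := idx.
exists n; split=> //; exists (fun i => lam0 - toC R (f i)); split; [|split].
- move=> i; split; first by apply: CspanB lam0S _; apply/Cspan_toC_Qspan.
  have [u [z [NAu [zS bfuz]]]] :=
    shift_in_NA_add_Zspan genA scA supw Fplus_face lam0S alpha_lam0 (fS i).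
  by exists u, z; rewrite opprB addrCA alpha_lam0 -raddfD addrC bfuz.
- move=> i j [z [zS]]; rewrite subrBB -raddfB => /toC_inj fz.
  by apply: f_inj; rewrite -opprB fz; exact: ZspanN.
- move=> lam [lamS [u [z [NAu [zS alpha_lam]]]]].
  have ylam : toC R (u + z - beta) = lam0 - lam by rewrite raddfB /= -alpha_lam -alpha_lam0 subrBB.
  have [|i yfi] := f_cover (u + z - beta).
    by apply/Cspan_toC_Qspan; rewrite ylam; exact: CspanB.
  exists i, (f i - (u + z - beta)); split; first by rewrite -opprB; exact: ZspanN.
  by rewrite [toC R (_ - _)]raddfB /= ylam !opprB addrCA.
Qed.

End ExtremeClasses.

Theorem proposition8p23 (R : realType) (d : nat) (A : seq 'rV[int]_d) :
  generates A -> scored R A ->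
  forall alpha : 'rV[R[i]]_d, extreme A alpha.
Proof.
move=> genA scA alpha w supw; split; first exact: E_full_of_in_Face.
by move=> notFace lam /(E_pred_in_Face supw).
Qed.
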